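(* Suppose $X \in M_m^{S}\otimes M_n^{S}$ and let $B \in M_m\otimes M_n$ be any matrix with $X = \tfrac14\big(B + B^T + B^\Gamma + (B^T)^\Gamma\big)$. Then \[ \mu^{\mathbb{C}}_{\min}(X) \ge W^{1+i}_{\min}(B) \quad\text{and}\quad \mu^{\mathbb{C}}_{\max}(X) \le W^{1+i}_{\max}(B). \]
   Context: $M_n$ denotes real $n\times n$ matrices, $M_n^S$ the real symmetric ones, and $M_m\otimes M_n$ is identified with $M_{mn}$ via the Kronecker product; $M_m^S\otimes M_n^S$ is the span of $Y\otimes Z$ with $Y\in M_m^S$, $Z\in M_n^S$ (equivalently, real $X$ with $X = X^T = X^\Gamma$). For $A = \sum_j X_j \otimes Y_j$, the partial transpose is $A^\Gamma = \sum_j X_j \otimes Y_j^T$. $\mu^{\mathbb{C}}_{\min}(X) = \min\{(\mathbf{v}\otimes\mathbf{w})^*X(\mathbf{v}\otimes\mathbf{w}) : \mathbf{v}\in\mathbb{C}^m,\mathbf{w}\in\mathbb{C}^n,\|\mathbf{v}\|=\|\mathbf{w}\|=1\}$ and $\mu^{\mathbb{C}}_{\max}(X)$ is the corresponding maximum. The numerical range of $A\in M_N(\mathbb{C})$ is $W(A) = \{\mathbf{x}^*A\mathbf{x} : \mathbf{x}\in\mathbb{C}^N, \|\mathbf{x}\|=1\}$. For real $B$, $W^{1+i}(B) = \{c\in\mathbb{R} : c(1+i)\in W(B+iB^\Gamma)\}$, a nonempty compact interval with minimum $W^{1+i}_{\min}(B)$ and maximum $W^{1+i}_{\max}(B)$.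 *)

From HB Require Import structures.
From mathcomp Require Import all_boot all_order all_algebra.
From mathcomp Require Import all_classical all_reals.
From mathcomp Require Import complex mxtens.
Set Implicit Arguments. Unset Strict Implicit. Unset Printing Implicit Defensive.
Import Order.TTheory GRing.Theory Num.Theory.
Local Open Scope ring_scope.
Local Open Scope classical_set_scope.

(* M_m (x) M_n is identified with 'M_(m*n) via the Kronecker product
   [A *t B] of mxtens, whose row/column index (i,j) is [mxtens_index (i,j)]. *)

(* Partial transpose: (A^Gamma)_{(i1,i2),(j1,j2)} = A_{(i1,j2),(j1,i2)},
   so that (X *t Y)^Gamma = X *t Y^T, extended linearly. *)
Definition ptrans {T : Type} {m n : nat} (A : 'M[T]_(m * n)) : 'M[T]_(m * n) :=
  \matrix_(p, q)
    A (mxtens_index ((mxtens_unindex p).1, (mxtens_unindex q).2))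
      (mxtens_index ((mxtens_unindex q).1, (mxtens_unindex p).2)).

Definition in_symtens {R : pzRingType} {m n : nat} (X : 'M[R]_(m * n)) : Prop :=
  exists (K : nat) (Y : 'I_K -> 'M[R]_m) (Z : 'I_K -> 'M[R]_n),
    (forall k, (Y k)^T = Y k) /\ (forall k, (Z k)^T = Z k) /\
    X = \sum_(k < K) (Y k *t Z k).

Section Complexified.
Variable R : realType.
Local Notation C := (R[i]).

Definition cmx {p q : nat} (A : 'M[R]_(p, q)) : 'M[C]_(p, q) :=
  map_mx (fun x => x%:C%C) A.

Definition adjmx {p q : nat} (A : 'M[C]_(p, q)) : 'M[C]_(q, p) :=
  (map_mx (@conjc R) A)^T.

Definition qform {N : nat} (A : 'M[C]_N) (x : 'cV[C]_N) : C :=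
  (adjmx x *m A *m x) 0 0.

Definition unit_vec {N : nat} (x : 'cV[C]_N) : Prop :=
  (adjmx x *m x) 0 0 = 1.

Definition numrange {N : nat} (A : 'M[C]_N) : set C :=
  [set z | exists x : 'cV[C]_N, unit_vec x /\ z = qform A x].

Definition W1i {m n : nat} (B : 'M[R]_(m * n)) : set R :=
  [set c | numrange (cmx B + (Complex 0 1) *: cmx (ptrans B))
                    (c%:C%C * (1 + Complex 0 1))].

Definition W1i_min {m n : nat} (B : 'M[R]_(m * n)) : R := inf (W1i B).
Definition W1i_max {m n : nat} (B : 'M[R]_(m * n)) : R := sup (W1i B).

Definition prod_values {m n : nat} (X : 'M[R]_(m * n)) : set R :=
  [set r | exists (v : 'cV[C]_m) (w : 'cV[C]_n),
      unit_vec v /\ unit_vec w /\ qform (cmx X) (v *t w) = r%:C%C].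

Definition muC_min {m n : nat} (X : 'M[R]_(m * n)) : R := inf (prod_values X).
Definition muC_max {m n : nat} (X : 'M[R]_(m * n)) : R := sup (prod_values X).

End Complexified.

(* For unit vectors v, w put z1 = v (x) w, z2 = conj v (x) conj w, z3 = v (x) conj w and
   z4 = conj v (x) w.  Since z^* B^T z = (conj z)^* B (conj z) and
   (v (x) w)^* B^Gamma (v (x) w) = (v (x) conj w)^* B (v (x) conj w), the value
   c = (v (x) w)^* X (v (x) w) is the mean of the four numbers f_k = z_k^* B z_k, while
   z_k^* (B + i B^Gamma) z_k runs through f_1 + i f_3, f_2 + i f_4, f_3 + i f_1, f_4 + i f_2,
   whose mean is c (1 + i).  By convexity of the numerical range (Toeplitz-Hausdorff;
   only the midpoint case is needed) c (1 + i) lies in W(B + i B^Gamma), i.e. c lies in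
   W^{1+i}(B).  This interval is bounded, so its infimum and supremum bound c. *)

From HB Require Import structures.
From mathcomp Require Import all_boot all_order all_algebra.
From mathcomp Require Import all_classical all_reals.
From mathcomp Require Import complex mxtens.
From mathcomp Require Import ring.
Set Implicit Arguments. Unset Strict Implicit. Unset Printing Implicit Defensive.
Import Order.TTheory GRing.Theory Num.Theory.
Local Open Scope ring_scope.
Local Close Scope complex_scope.

Lemma map_ptrans (T U : Type) (f : T -> U) m n (A : 'M[T]_(m * n)) :
  map_mx f (ptrans A) = ptrans (map_mx f A).
Proof. by apply/matrixP => i j; rewrite !mxE. Qed.

Lemma big_mxtens_index (V : nmodType) m n (F : 'I_(m * n) -> V) :
  \sum_p F p = \sum_(i < m) \sum_(j < n) F (mxtens_index (i, j)).
Proof.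
rewrite pair_big /= (reindex (@mxtens_index m n)) /=; first by apply: eq_bigr => -[].
by exists (@mxtens_unindex m n) => k _; rewrite (mxtens_indexK, mxtens_unindexK).
Qed.

Lemma unimodular_real_multiple (C : numClosedFieldType) (d : C) :
  exists2 e : C, e^* * e = 1 & (e * d)^* = e * d.
Proof.
have [->|d0] := eqVneq d 0; first by exists 1; rewrite ?conjC1 ?mulr1 // mulr0 conjC0.
exists (d^* / `|d|).
  rewrite rmorphM /= conjCK fmorphV /= geC0_conj ?normr_ge0 //.
  by rewrite mulrACA -normCK expr2 -invfM mulfV // mulf_neq0 // normr_eq0.
rewrite mulrAC -normCKC expr2 mulfK ?normr_eq0 //.
by rewrite geC0_conj ?normr_ge0.
Qed.

Lemma real_quadratic_root (C : numClosedFieldType) (g : C) : g^* = g ->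
  exists s : C, [/\ s^* = s, s != 0 & s ^+ 2 = g * s + 1].
Proof.
move=> gr; have g2 : 0 <= g ^+ 2 + 4.
  by rewrite addr_ge0 ?ler0n // expr2 -{2}gr -normCK exprn_ge0.
set r := sqrtC (g ^+ 2 + 4).
have rr : r^* = r by rewrite geC0_conj // sqrtC_ge0.
have r2 : r ^+ 2 = g ^+ 2 + 4 by rewrite sqrtCK.
have sq : ((g + r) / 2) ^+ 2 = g * ((g + r) / 2) + 1.
  apply/eqP; rewrite -subr_eq0; apply/eqP.
  have -> : ((g + r) / 2) ^+ 2 - (g * ((g + r) / 2) + 1) = (r ^+ 2 - (g ^+ 2 + 4)) / 4.
    by field.
  by rewrite r2 subrr mul0r.
exists ((g + r) / 2); split => //.
  by rewrite rmorphM /= rmorphD /= gr rr fmorphV /= conjC_nat.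
apply/eqP => s0; move: sq; rewrite s0 expr0n mulr0 add0r => /esym/eqP.
by rewrite oner_eq0.
Qed.

Section Sesquilinear.
Variable R : realType.
Local Notation C := (R[i]).

Definition sesq {N : nat} (A : 'M[C]_N) (x y : 'cV[C]_N) : C :=
  (adjmx x *m A *m y) 0 0.

Definition conj_mx {p q : nat} (x : 'M[C]_(p, q)) : 'M[C]_(p, q) :=
  map_mx Num.conj x.

Lemma adjmxD p q (x y : 'M[C]_(p, q)) : adjmx (x + y) = adjmx x + adjmx y.
Proof. by apply/matrixP => i j; rewrite !mxE rmorphD. Qed.

Lemma adjmxZ p q a (x : 'M[C]_(p, q)) : adjmx (a *: x) = a^* *: adjmx x.
Proof. by apply/matrixP => i j; rewrite !mxE rmorphM. Qed.

Lemma sesqE N (A : 'M[C]_N) x y :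
  sesq A x y = \sum_i \sum_j (x i 0)^* * A i j * y j 0.
Proof.
rewrite /sesq mxE; under eq_bigr do rewrite mxE mulr_suml.
rewrite exchange_big; apply: eq_bigr => i _; apply: eq_bigr => j _.
by rewrite !mxE.
Qed.

Lemma unit_vec_sesq N (x : 'cV[C]_N) : unit_vec x <-> sesq 1%:M x x = 1.
Proof. by rewrite /unit_vec /sesq mulmx1. Qed.

Lemma sesqDl N (A : 'M[C]_N) x y z : sesq A (x + y) z = sesq A x z + sesq A y z.
Proof. by rewrite /sesq adjmxD !mulmxDl mxE. Qed.

Lemma sesqDr N (A : 'M[C]_N) x y z : sesq A z (x + y) = sesq A z x + sesq A z y.
Proof. by rewrite /sesq mulmxDr mxE. Qed.

Lemma sesqZl N (A : 'M[C]_N) a x z : sesq A (a *: x) z = a^* * sesq A x z.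
Proof. by rewrite /sesq adjmxZ -!scalemxAl mxE. Qed.

Lemma sesqZr N (A : 'M[C]_N) a x z : sesq A z (a *: x) = a * sesq A z x.
Proof. by rewrite /sesq -scalemxAr mxE. Qed.

Lemma sesqDA N (A B : 'M[C]_N) x z : sesq (A + B) x z = sesq A x z + sesq B x z.
Proof. by rewrite /sesq mulmxDr mulmxDl mxE. Qed.

Lemma sesqZA N (A : 'M[C]_N) a x z : sesq (a *: A) x z = a * sesq A x z.
Proof. by rewrite /sesq -scalemxAr -scalemxAl mxE. Qed.

Lemma sesq1E N (x y : 'cV[C]_N) : sesq 1%:M x y = \sum_i (x i 0)^* * y i 0.
Proof. by rewrite /sesq mulmx1 mxE; apply: eq_bigr => i _; rewrite !mxE. Qed.

Lemma sesq1C N (x y : 'cV[C]_N) : sesq 1%:M y x = (sesq 1%:M x y)^*.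
Proof.
rewrite !sesq1E rmorph_sum; apply: eq_bigr => i _.
by rewrite rmorphM /= conjCK mulrC.
Qed.

Lemma sesq1_norm N (x : 'cV[C]_N) : sesq 1%:M x x = \sum_i `|x i 0| ^+ 2.
Proof. by rewrite sesq1E; apply: eq_bigr => i _; rewrite normCKC. Qed.

Lemma sesq1_ge0 N (x : 'cV[C]_N) : 0 <= sesq 1%:M x x.
Proof. by rewrite sesq1_norm sumr_ge0 // => i _; rewrite exprn_ge0. Qed.

Lemma sesq1_eq0 N (x : 'cV[C]_N) : (sesq 1%:M x x == 0) = (x == 0).
Proof.
apply/idP/eqP => [|->]; last by rewrite sesq1E big1 // => i _; rewrite mxE mulr0.
rewrite sesq1_norm psumr_eq0 => [/allP x0|i _]; last by rewrite exprn_ge0.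
apply/matrixP => i j; rewrite [j]ord1 mxE.
by apply/eqP; move: (x0 i (mem_index_enum i)); rewrite expf_eq0 normr_eq0.
Qed.

Lemma sesq_scale N (A : 'M[C]_N) a x : sesq A (a *: x) (a *: x) = a^* * a * sesq A x x.
Proof. by rewrite sesqZl sesqZr mulrA. Qed.

Lemma sesq_comb N (A : 'M[C]_N) a b x y :
  sesq A (a *: x + b *: y) (a *: x + b *: y) =
  a^* * a * sesq A x x + a^* * b * sesq A x y + b^* * a * sesq A y x + b^* * b * sesq A y y.
Proof. rewrite !sesqDl !sesqDr !sesqZl !sesqZr; ring. Qed.

Lemma numrange_sesq N (A : 'M[C]_N) x : sesq 1%:M x x = 1 -> numrange A (sesq A x x).
Proof. by move=> ux; exists x; split; first exact/unit_vec_sesq. Qed.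

Lemma numrange_ratio N (A : 'M[C]_N) z : z != 0 ->
  numrange A (sesq A z z / sesq 1%:M z z).
Proof.
rewrite -sesq1_eq0 => nz0; pose t := (sqrtC (sesq 1%:M z z))^-1.
have tt : t^* * t = (sesq 1%:M z z)^-1.
  by rewrite geC0_conj ?invr_ge0 ?sqrtC_ge0 ?sesq1_ge0 // -expr2 exprVn sqrtCK.
rewrite mulrC -tt -sesq_scale; apply: numrange_sesq.
by rewrite sesq_scale tt mulVf.
Qed.

Lemma numrange_midpoint N (A : 'M[C]_N) a b :
  numrange A a -> numrange A b -> numrange A ((a + b) / 2).
Proof.
move=> [x [/unit_vec_sesq ux ->]] [y [/unit_vec_sesq uy ->]].
rewrite /qform -/(sesq A x x) -/(sesq A y y).
set P := sesq A x x; set Q := sesq A y y; set M := (P + Q) / 2.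
have [PQ|PQ] := eqVneq P Q.
  by rewrite /M -PQ (_ : (P + P) / 2 = P); [apply: numrange_sesq | field].
have QP0 : Q - P != 0 by rewrite subr_eq0 eq_sym.
(* Look for z = s x + e y with |e| = 1 and s real: the phase e makes the cross term g
   real, and then z^* A z = M z^* z reduces to s^2 = g s + 1. *)
suff [z z0 zM] : exists2 z, z != 0 & sesq A z z = M * sesq 1%:M z z.
  by move: (numrange_ratio A z0); rewrite zM mulfK // sesq1_eq0.
set al := sesq A x y; set be := sesq A y x; set ga := sesq 1%:M x y.
set u := 2 * (al - M * ga) / (Q - P); set w := 2 * (be - M * ga^*) / (Q - P).
have [e ee ed] := unimodular_real_multiple (u - w^*).
set g := e * u + e^* * w.
have gr : g^* = g.
  have conj_sub (c v v' : C) :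
      (c * v + c^* * v')^* - (c * v + c^* * v') = (c * (v - v'^*))^* - c * (v - v'^*).
    by rewrite !rmorphD /= !rmorphM /= rmorphB /= !conjCK; ring.
  by apply/eqP; rewrite -subr_eq0 conj_sub ed subrr.
have [s [sr s0 sq]] := real_quadratic_root gr.
exists (s *: x + e *: y).
  apply: contraNneq PQ => /eqP; rewrite addr_eq0 => /eqP xy.
  have xk : x = (- e / s) *: y by apply: (scalerI s0); rewrite scalerA mulrC divfK // scaleNr.
  have kk : (- e / s)^* * (- e / s) = 1 by move: ux; rewrite xk sesq_scale uy mulr1.
  by rewrite /P xk sesq_scale kk mul1r.
rewrite !sesq_comb ux uy -/P -/Q -/al -/be -/ga sesq1C sr ee !mulr1.
apply/eqP; rewrite -subr_eq0; apply/eqP.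
transitivity ((Q - P) / 2 * (1 - (s ^+ 2 - g * s))); first by rewrite /g /u /w /M; field.
by rewrite sq addrAC subrr add0r subrr mulr0.
Qed.

Lemma numrange_mean4 N (A : 'M[C]_N) a b c d :
  numrange A a -> numrange A b -> numrange A c -> numrange A d ->
  numrange A ((a + b + c + d) / 4).
Proof.
move=> Wa Wb Wc Wd.
have := numrange_midpoint (numrange_midpoint Wa Wb) (numrange_midpoint Wc Wd).
by congr numrange; field.
Qed.

Lemma numrange_norm_le N (A : 'M[C]_N) z : numrange A z -> `|z| <= \sum_i \sum_j `|A i j|.
Proof.
move=> [x [/unit_vec_sesq ux ->]]; rewrite /qform -/(sesq A x x) sesqE.
have x_le1 i : `|x i 0| <= 1.
  rewrite -(@expr_le1 _ 2) // -ux sesq1_norm (bigD1 i) //= lerDl.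
  by apply: sumr_ge0 => j _; rewrite exprn_ge0.
apply: le_trans (ler_norm_sum _ _ _) _; apply: ler_sum => i _.
apply: le_trans (ler_norm_sum _ _ _) _; apply: ler_sum => j _.
rewrite !normrM norm_conjC.
apply: (@le_trans _ _ (`|x i 0| * `|A i j|)); first by rewrite ler_piMr ?mulr_ge0.
by rewrite ler_piMl.
Qed.

Lemma sesq1_conj N (x : 'cV[C]_N) : sesq 1%:M (conj_mx x) (conj_mx x) = sesq 1%:M x x.
Proof. by rewrite !sesq1_norm; apply: eq_bigr => i _; rewrite mxE norm_conjC. Qed.

Lemma conj_mxK p q : involutive (@conj_mx p q).
Proof. by move=> x; apply/matrixP => i j; rewrite !mxE conjCK. Qed.

Lemma sesq_trmx N (A : 'M[C]_N) z : sesq A^T z z = sesq A (conj_mx z) (conj_mx z).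
Proof.
rewrite !sesqE exchange_big; apply: eq_bigr => i _; apply: eq_bigr => j _.
by rewrite !mxE conjCK; ring.
Qed.

Lemma tens_colE m n (v : 'cV[C]_m) (w : 'cV[C]_n) i j (o : 'I_(1 * 1)) :
  (v *t w) (mxtens_index (i, j)) o = v i 0 * w j 0.
Proof.
rewrite mxE mxtens_indexK /=.
by congr (v i _ * w j _); apply: val_inj; rewrite /= ?divn1 ?modn1; case: o => -[].
Qed.

Lemma conj_mx_tens m n (v : 'cV[C]_m) (w : 'cV[C]_n) :
  conj_mx (v *t w) = conj_mx v *t conj_mx w.
Proof. exact: map_mxT. Qed.

Lemma sesq1_tens m n (v : 'cV[C]_m) (w : 'cV[C]_n) :
  sesq 1%:M (v *t w) (v *t w) = sesq 1%:M v v * sesq 1%:M w w.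
Proof.
rewrite !sesq1_norm big_mxtens_index mulr_suml; apply: eq_bigr => i _.
by rewrite mulr_sumr; apply: eq_bigr => j _; rewrite tens_colE normrM exprMn.
Qed.

Lemma sesq_ptrans_tens m n (A : 'M[C]_(m * n)) (v : 'cV[C]_m) (w : 'cV[C]_n) :
  sesq (ptrans A) (v *t w) (v *t w) = sesq A (v *t conj_mx w) (v *t conj_mx w).
Proof.
rewrite !sesqE big_mxtens_index [RHS]big_mxtens_index; apply: eq_bigr => i _.
rewrite exchange_big [RHS]exchange_big big_mxtens_index [RHS]big_mxtens_index.
apply: eq_bigr => k _; rewrite [RHS]exchange_big.
apply: eq_bigr => l _; apply: eq_bigr => j _.
rewrite !tens_colE !mxE !mxtens_indexK /= !rmorphM /= conjCK; ring.
Qed.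

Lemma sesq_delta N (A : 'M[C]_N) p : sesq A (delta_mx p 0) (delta_mx p 0) = A p p.
Proof.
rewrite sesqE (bigD1 p) //= [X in _ + X]big1 ?addr0 => [|q qp]; last first.
  by rewrite big1 // => j _; rewrite !mxE (negbTE qp) conjC0 !mul0r.
rewrite (bigD1 p) //= [X in _ + X]big1 ?addr0 => [|q qp].
  by rewrite !mxE eqxx conjC1 mul1r mulr1.
by rewrite !mxE (negbTE qp) mulr0.
Qed.

Lemma tens_delta_col m n (i : 'I_m) (j : 'I_n) :
  (delta_mx i 0 : 'cV[C]_m) *t (delta_mx j 0 : 'cV[C]_n) = delta_mx (mxtens_index (i, j)) 0.
Proof.
apply/matrixP => q o; case: (mxtens_indexP q) => a b.
rewrite tens_colE !mxE (inj_eq (can_inj (@mxtens_indexK m n))) xpair_eqE.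
by rewrite [o]ord1 eqxx !andbT; case: (a == i); rewrite ?mul1r ?mul0r.
Qed.

Lemma prod_values_sub_W1i m n (B X : 'M[R]_(m * n)) :
  X = 4^-1 *: (B + B^T + ptrans B + ptrans (B^T)) ->
  forall c, prod_values X c -> W1i B c.
Proof.
move=> hX c [v [w [/unit_vec_sesq uv [/unit_vec_sesq uw hc]]]].
pose f z := sesq (cmx B) z z.
have pB (M : 'M[R]_(m * n)) (z1 : 'cV_m) (z2 : 'cV_n) :
    sesq (cmx (ptrans M)) (z1 *t z2) (z1 *t z2) =
    sesq (cmx M) (z1 *t conj_mx z2) (z1 *t conj_mx z2).
  by rewrite /cmx map_ptrans sesq_ptrans_tens.
have tB (z : 'cV_(m * n)) : sesq (cmx B^T) z z = f (conj_mx z).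
  by rewrite (_ : cmx B^T = (cmx B)^T) ?sesq_trmx //; apply/matrixP => i j; rewrite !mxE.
have Wz (z1 : 'cV_m) (z2 : 'cV_n) : sesq 1%:M z1 z1 = 1 -> sesq 1%:M z2 z2 = 1 ->
    numrange (cmx B + Complex 0 1 *: cmx (ptrans B))
             (f (z1 *t z2) + Complex 0 1 * f (z1 *t conj_mx z2)).
  move=> u1 u2; rewrite /f -pB -sesqZA -sesqDA; apply: numrange_sesq.
  by rewrite sesq1_tens u1 u2 mulr1.
have cuv : sesq 1%:M (conj_mx v) (conj_mx v) = 1 by rewrite sesq1_conj.
have cuw : sesq 1%:M (conj_mx w) (conj_mx w) = 1 by rewrite sesq1_conj.
have := numrange_mean4 (Wz _ _ uv uw) (Wz _ _ cuv cuw) (Wz _ _ uv cuw) (Wz _ _ cuv uw).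
rewrite !conj_mxK; congr numrange.
have cX : cmx X = 4^-1 *: (cmx B + cmx B^T + cmx (ptrans B) + cmx (ptrans B^T)).
  by rewrite hX /cmx map_mxZ !map_mxD fmorphV rmorph_nat.
move: hc; rewrite /qform -/(sesq _ _ _) cX sesqZA !sesqDA !pB !tB !conj_mx_tens conj_mxK.
by rewrite /f => <-; field.
Qed.

Lemma prod_values_nonempty m n (X : 'M[R]_(m * n)) : (0 < m)%N -> (0 < n)%N ->
  exists r, prod_values X r.
Proof.
move=> hm hn; pose i := Ordinal hm; pose j := Ordinal hn.
have u k (p : 'I_k) : unit_vec (delta_mx p 0 : 'cV[C]_k).
  by apply/unit_vec_sesq; rewrite sesq_delta mxE eqxx.
exists (X (mxtens_index (i, j)) (mxtens_index (i, j))).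
exists (delta_mx i 0), (delta_mx j 0); do 2!split => //.
by rewrite /qform -/(sesq _ _ _) tens_delta_col sesq_delta mxE.
Qed.

Lemma W1i_bounded m n (B : 'M[R]_(m * n)) : exists K, forall c, W1i B c -> `|c| <= K.
Proof.
set A := cmx B + Complex 0 1 *: cmx (ptrans B).
exists (complex.Re (\sum_i \sum_j `|A i j|)) => c /numrange_norm_le.
set S := \sum_i _; set z := c%:C%C * _ => zS.
have : `|complex.Re z|%:C%C <= S := le_trans (normc_ge_Re z) zS.
by rewrite lecE /= addr0 add0r mulr1 mul0r subr0 => /andP[].
Qed.

End Sesquilinear.

Theorem corollary5p2 (R : realType) (m n : nat) (hm : (0 < m)%N) (hn : (0 < n)%N)
  (X B : 'M[R]_(m * n)) :
  in_symtens X ->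
  X = 4^-1 *: (B + B^T + ptrans B + ptrans (B^T)) ->
  W1i_min B <= muC_min X /\ muC_max X <= W1i_max B.
Proof.
move=> _ /prod_values_sub_W1i XB.
have [r Xr] := prod_values_nonempty X hm hn.
have [K WK] := W1i_bounded B.
have Wlb : has_lbound (W1i B) by exists (- K) => c /WK; rewrite ler_norml => /andP[].
have Wub : has_ubound (W1i B) by exists K => c /WK; rewrite ler_norml => /andP[].
split; first by apply: lb_le_inf => [|s /XB]; [exists r | exact: ge_inf].
by apply: ge_sup => [|s /XB]; [exists r | exact: ub_le_sup].
Qed.
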